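(* Let $\mathbbm k\ge2$ be an integer, $\Gamma$ an infinite set, $\varphi\colon\Gamma\to\Gamma$ an injective map without periodic points, and $w=(w_\gamma)_{\gamma\in\Gamma}\in\mathbb Z_{\mathbbm k}^\Gamma$ invertible. Let $\sigma\colon\mathbb Z_{\mathbbm k}^\Gamma\to\mathbb Z_{\mathbbm k}^\Gamma$ be the weighted shift $(\sigma x)_\gamma=w_\gamma x_{\varphi\gamma}$. Then the $\mathbb Z_+$-semiflow generated by $\sigma$ on $\mathbb Z_{\mathbbm k}^\Gamma$ is weakly mixing, and the $\mathbb Z_+$-semiflow generated by $\sigma\times\sigma$ on $\mathbb Z_{\mathbbm k}^\Gamma\times\mathbb Z_{\mathbbm k}^\Gamma$ is Devaney chaotic.
   Context: $\mathbb Z_{\mathbbm k}=\mathbb Z/\mathbbm k\mathbb Z$ with the discrete topology, $\mathbb Z_{\mathbbm k}^\Gamma$ with the product topology. An element $k\in\mathbb Z_{\mathbbm k}$ is invertible if there is $k^{-1}$ with $kk^{-1}=1\pmod{\mathbbm k}$; $w$ is invertible if every $w_\gamma$ is. $\gamma$ is a periodic point of $\varphi$ if $\varphi^\tau\gamma=\gamma$ for some integer $\tau\ge1$. A $\mathbb Z_+$-semiflow $(f,Z)$ is topologically transitive if for all nonempty open $U,V$ there is $n\ge0$ with $f^nU\cap V\ne\emptyset$; it is weakly mixing if $(f\times f,Z\times Z)$ is topologically transitive; it is Devaney chaotic if it is topologically transitive and its periodic points ($f^nz=z$ for some $n\ge1$) are dense. *)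

From HB Require Import structures.
From mathcomp Require Import all_boot all_order all_algebra.
From mathcomp Require Import all_classical all_reals all_analysis.
Set Implicit Arguments. Unset Strict Implicit. Unset Printing Implicit Defensive.
Import Order.TTheory GRing.Theory Num.Theory.
Local Open Scope classical_set_scope.
Local Open Scope ring_scope.

Definition ZkGamma (k : nat) (Gamma : Type) : Type :=
  {ptws Gamma -> discrete_topology 'Z_k}.

Definition wshift (k : nat) (Gamma : Type) (phi : Gamma -> Gamma)
  (w : Gamma -> 'Z_k) (x : ZkGamma k Gamma) : ZkGamma k Gamma :=
  fun g => (w g * (x (phi g) : 'Z_k))%R.

(* Z_+ semiflow generated by f: n |-> f^n, n >= 0. *)
Definition topologically_transitive (Z : topologicalType) (f : Z -> Z) : Prop :=
  forall U V : set Z, open U -> open V -> U !=set0 -> V !=set0 ->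
    exists n : nat, ((iter n f) @` U) `&` V !=set0.

Definition prod_map (Z : Type) (f : Z -> Z) (p : Z * Z) : Z * Z :=
  (f p.1, f p.2).

Definition weakly_mixing (Z : topologicalType) (f : Z -> Z) : Prop :=
  @topologically_transitive (Z * Z)%type (prod_map f).

Definition periodic_points (Z : Type) (f : Z -> Z) : set Z :=
  [set z | exists n : nat, (0 < n)%N /\ iter n f z = z].

Definition devaney_chaotic (Z : topologicalType) (f : Z -> Z) : Prop :=
  topologically_transitive f /\ dense (periodic_points f).

(* A basic open set of Z_k^Gamma is a cylinder: it fixes the coordinates of a
   finite list l.  As phi is injective without periodic points, for n large
   enough phi^n maps no point of l into l; then sigma^n, itself the weighted
   shift over phi^n with invertible weights, sends a point prescribed on l to a
   point prescribed on l, the two sets of coordinates being disjoint.  Applied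
   coordinatewise this gives transitivity of sigma x sigma, i.e. weak mixing of
   sigma.  For periodic points, let psi = phi^n with no positive psi-iterate
   mapping a point of l into l: prescribing x on l and propagating along the
   psi-orbits by x_c = W(c) x_(psi c) is consistent, since the grand orbits of
   the points of l are pairwise disjoint and not periodic, and yields a
   sigma^n-fixed point in any cylinder over l. *)

From Stdlib Require List.
From HB Require Import structures.
From mathcomp Require Import all_boot all_order all_algebra.
From mathcomp Require Import all_classical all_reals all_analysis.
Set Implicit Arguments.
Unset Strict Implicit.
Unset Printing Implicit Defensive.
Import GRing.Theory.
Local Open Scope classical_set_scope.
Local Open Scope ring_scope.

Section Cylinders.
Variables (k : nat) (Gamma : Type).
Implicit Types (l : seq Gamma) (u x : ZkGamma k Gamma).

Definition cylinder l u : set (ZkGamma k Gamma) :=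
  [set x | forall g, List.In g l -> x g = u g].

Lemma cylinder_catl l1 l2 u : cylinder (l1 ++ l2) u `<=` cylinder l1 u.
Proof. by move=> x ux g gl; apply/ux/List.in_app_iff; left. Qed.

Lemma cylinder_catr l1 l2 u : cylinder (l1 ++ l2) u `<=` cylinder l2 u.
Proof. by move=> x ux g gl; apply/ux/List.in_app_iff; right. Qed.

Lemma nbhs_cylinder u (U : set (ZkGamma k Gamma)) :
  nbhs u U -> exists l, cylinder l u `<=` U.
Proof.
pose C := filter_from setT (cylinder ^~ u).
have CF : Filter C.
  apply: filter_fromT_filter; first by exists [::].
  by move=> l1 l2; exists (l1 ++ l2) => x ux; split;
    [exact: cylinder_catl ux|exact: cylinder_catr ux].
suff /(_ U) Cu : C --> (u : ZkGamma k Gamma) by move=> /Cu [l _]; exists l.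
(* The product topology is the supremum of the initial topologies of the
   coordinate projections. *)
apply/cvg_sup => g A /=.
rewrite (@nbhsE
  (initial_topology (fun f : Gamma -> discrete_topology 'Z_k => f g))).
move=> -[_ [[B oB <-] Bu] BA].
by exists [:: g] => // x ux; apply: BA; rewrite /= ux //; left.
Qed.

Lemma open_pair_cylinder (U : set (ZkGamma k Gamma * ZkGamma k Gamma)) p :
  open U -> U p -> exists l, forall q,
    cylinder l p.1 q.1 -> cylinder l p.2 q.2 -> U q.
Proof.
move=> oU Up; have : nbhs p U by exact: open_nbhs_nbhs.
move=> [[U1 U2] [/= /nbhs_cylinder [l1 H1] /nbhs_cylinder [l2 H2]] sU].
exists (l1 ++ l2) => q pq1 pq2; apply: sU; split.
  exact/H1/(cylinder_catl pq1).
exact/H2/(cylinder_catr pq2).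
Qed.
End Cylinders.

Definition separates (Gamma : Type) (f : Gamma -> Gamma) (l : seq Gamma) :=
  forall a b, List.In a l -> List.In b l -> f a <> b.

Section Orbits.
Variables (Gamma : Type) (phi : Gamma -> Gamma).
Hypothesis phi_inj : injective phi.

Lemma iter_inj n : injective (iter n phi).
Proof. by elim: n => [|n IHn] a b //= /phi_inj /IHn. Qed.

Hypothesis phi_aperiodic : forall g n, (0 < n)%N -> iter n phi g <> g.

Lemma iter_neq_near a b : \forall n \near \oo, iter n phi a <> b.
Proof.
have [[m amb]|] := pselect (exists m, iter m phi a = b); last first.
  by move=> nab; near=> n => abn; apply: nab; exists n.
near=> n; rewrite -amb -(subnKC (_ : m <= n)%N);
  last by near: n; exact: nbhs_infty_ge.
rewrite iterD => /(@iter_inj m); apply: phi_aperiodic; rewrite subn_gt0.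
by near: n; exact: nbhs_infty_gt.
Unshelve. all: by end_near. Qed.

Lemma separates_iter_near l : \forall n \near \oo, separates (iter n phi) l.
Proof.
suff: \forall n \near \oo, forall p, List.In p (List.list_prod l l) ->
    iter n phi p.1 <> p.2.
  by apply: filterS => n sep a b al bl; apply: (sep (a, b)); apply/List.in_prod.
elim: (List.list_prod l l) => [|p ps IHps]; first exact: nearW.
apply: filterS (filterI (iter_neq_near p.1 p.2) IHps) => n [pn psn] q /=.
by case=> [<-|/psn].
Qed.

End Orbits.

Section WeightedShift.
Variables (k : nat) (Gamma : Type) (phi : Gamma -> Gamma) (w : Gamma -> 'Z_k).

Definition shift_weight n g := \prod_(i < n) w (iter i phi g).

Lemma shift_weightS n g : shift_weight n.+1 g = w g * shift_weight n (phi g).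
Proof.
rewrite /shift_weight big_ord_recl; congr (_ * _).
by apply: eq_bigr => i _; rewrite iterSr.
Qed.

Lemma shift_weightD m n g :
  shift_weight (m + n) g = shift_weight m g * shift_weight n (iter m phi g).
Proof.
rewrite /shift_weight big_split_ord /=; congr (_ * _).
by apply: eq_bigr => i _; rewrite addnC iterD.
Qed.

Lemma iter_wshift n :
  iter n (wshift phi w) = wshift (iter n phi) (shift_weight n).
Proof.
apply: funext => x; elim: n => [|n IHn].
  by apply: funext => g; rewrite /wshift /shift_weight big_ord0 mul1r.
by apply: funext => g; rewrite iterS IHn /wshift shift_weightS -mulrA iterSr.
Qed.

Hypothesis w_unit : forall g, w g \is a GRing.unit.

Lemma shift_weight_unit n g : shift_weight n g \is a GRing.unit.
Proof. by apply/unitr_prod => i _; apply: w_unit. Qed.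

Hypothesis phi_inj : injective phi.

Lemma wshift_interpolate l u v : separates phi l ->
  exists x, cylinder l u x /\ cylinder l v (wshift phi w x).
Proof.
move=> sep.
pose x c := if pselect (exists2 g, List.In g l & phi g = c) is left H
  then (w (s2val (cid2 H)))^-1 * v (s2val (cid2 H)) else u c.
exists x; split=> g gl; rewrite /x /wshift.
  by case: pselect => // H; have [g' g'l /(sep _ _ g'l gl)] := H.
case: pselect => [H|[]]; last by exists g.
by case: cid2 => g' _ /phi_inj /= ->; rewrite mulVKr.
Qed.

Section OrbitExtension.
Variables (l : seq Gamma) (u : ZkGamma k Gamma).
Hypothesis l_wandering : forall n, (0 < n)%N -> separates (iter n phi) l.

Lemma wandering_iter_eq g h s t : List.In g l -> List.In h l ->
  iter s phi g = iter t phi h -> s = t /\ g = h.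
Proof.
wlog le_st : g h s t / (s <= t)%N => [hwlog gl hl gh|gl hl].
  have [le_st|/ltnW le_ts] := leqP s t; first exact: hwlog.
  by have [-> ->] := hwlog _ _ _ _ le_ts hl gl (esym gh).
rewrite -(subnKC le_st) iterD => /(iter_inj phi_inj) gh.
have [d0|d_gt0] := posnP (t - s); first by move: gh; rewrite d0 addn0 => ->.
by have := l_wandering d_gt0 hl gl; rewrite gh.
Qed.

(* [orbit_value c (g, i, j)] is the value at c forced by x = u on l and by the
   fixed-point equation x_c = w_c x_(phi c), when phi^i c = phi^j g. *)
Definition meets (c : Gamma) (p : Gamma * nat * nat) :=
  let: (g, i, j) := p in List.In g l /\ iter i phi c = iter j phi g.

Definition orbit_value (c : Gamma) (p : Gamma * nat * nat) :=
  let: (g, i, j) := p in shift_weight i c / shift_weight j g * u g.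

Lemma orbit_value_uniq c p q : meets c p -> meets c q ->
  orbit_value c p = orbit_value c q.
Proof.
case: p q => [[g i] j] [[g' i'] j'] /= [gl ci] [g'l ci'].
have [eij gg'] : (i' + j = i + j')%N /\ g = g'.
  by apply: wandering_iter_eq gl g'l _; rewrite !iterD -ci -ci' -!iterD addnC.
subst g'.
wlog le_ii' : i j i' j' ci ci' eij / (i <= i')%N => [hwlog|].
  have [|/ltnW le_i'i] := leqP i i'; first exact: hwlog.
  by rewrite (hwlog _ _ _ _ ci' ci (esym eij) le_i'i).
have [d ii'] : exists d, i' = (i + d)%N by exists (i' - i)%N; rewrite subnKC.
subst i'.
have -> : j' = (j + d)%N by apply/(@addnI i); rewrite -eij addnAC -addnA.
rewrite !shift_weightD ci invrM ?shift_weight_unit // mulrA.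
by rewrite mulrK ?shift_weight_unit.
Qed.

Definition orbit_extension : ZkGamma k Gamma := fun c =>
  if pselect (exists p, meets c p) is left H then orbit_value c (projT1 (cid H))
  else 0.

Lemma orbit_extensionE c p : meets c p -> orbit_extension c = orbit_value c p.
Proof.
move=> cp; rewrite /orbit_extension; case: pselect => [H|[]]; last by exists p.
by case: cid => q cq /=; apply: orbit_value_uniq.
Qed.

Lemma orbit_extension0 c : ~ (exists p, meets c p) -> orbit_extension c = 0.
Proof. by rewrite /orbit_extension; case: pselect. Qed.

Lemma cylinder_orbit_extension : cylinder l u orbit_extension.
Proof.
move=> g gl; rewrite (orbit_extensionE (p := (g, 0, 0)%N)) //=.
by rewrite /shift_weight big_ord0 divr1 mul1r.
Qed.

Lemma wshift_orbit_extension : wshift phi w orbit_extension = orbit_extension.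
Proof.
apply: funext => c; rewrite /wshift.
have [[[[g i] j] [gl ci]]|nmeets] := pselect (exists p, meets (phi c) p).
  rewrite (orbit_extensionE (p := (g, i, j))) //.
  rewrite (orbit_extensionE (p := (g, i.+1, j))).
    by rewrite /= shift_weightS !mulrA.
  by split; rewrite // iterSr.
rewrite !orbit_extension0 ?mulr0 // => -[[[g i] j] [gl ci]]; case: nmeets.
by exists (g, i, j.+1); split; rewrite //= -iterSr iterS ci.
Qed.

End OrbitExtension.
End WeightedShift.

Lemma iter_prod_map (Z : Type) (f : Z -> Z) n p :
  iter n (prod_map f) p = (iter n f p.1, iter n f p.2).
Proof. by elim: n => [|n /= ->]; [case: p|]. Qed.

Section IteratedShift.
Variables (k : nat) (Gamma : Type) (phi : Gamma -> Gamma) (w : Gamma -> 'Z_k).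
Hypothesis phi_inj : injective phi.
Hypothesis phi_aperiodic : forall g n, (0 < n)%N -> iter n phi g <> g.
Hypothesis w_unit : forall g, w g \is a GRing.unit.

Lemma iter_wshift_interpolate l : exists n, forall u v : ZkGamma k Gamma,
  exists x, cylinder l u x /\ cylinder l v (iter n (wshift phi w) x).
Proof.
have [N _ sepN] := separates_iter_near phi_inj phi_aperiodic l.
exists N => u v; rewrite iter_wshift.
apply: wshift_interpolate;
  [exact: shift_weight_unit|exact: iter_inj|exact: (sepN _ (leqnn N))].
Qed.

Lemma iter_wshift_periodic l : exists2 n, (0 < n)%N &
  forall u : ZkGamma k Gamma,
    exists x, cylinder l u x /\ iter n (wshift phi w) x = x.
Proof.
have [N _ sepN] := separates_iter_near phi_inj phi_aperiodic l.
exists N.+1 => // u; rewrite iter_wshift.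
have wandering m : (0 < m)%N -> separates (iter m (iter N.+1 phi)) l.
  move=> m_gt0 g h; rewrite -iterM; apply: sepN.
  by rewrite /= (leq_trans (leqnSn N)) // leq_pmull.
have weight_unit := shift_weight_unit phi w_unit N.+1.
have psi_inj := @iter_inj _ _ phi_inj N.+1.
exists (orbit_extension (iter N.+1 phi) (shift_weight phi w N.+1) l u).
by split; [apply: cylinder_orbit_extension|apply: wshift_orbit_extension].
Qed.

End IteratedShift.

Theorem theorem6 (k : nat) (Gamma : Type) (phi : Gamma -> Gamma)
  (w : Gamma -> 'Z_k) :
  (1 < k)%N ->
  infinite_set [set: Gamma] ->
  injective phi ->
  (forall (g : Gamma) (tau : nat), (0 < tau)%N -> iter tau phi g <> g) ->
  (forall g : Gamma, w g \is a GRing.unit) ->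
  weakly_mixing (wshift phi w) /\
  devaney_chaotic (prod_map (wshift phi w)).
Proof.
move=> _ _ phi_inj phi_aperiodic w_unit.
have mixing : weakly_mixing (wshift phi w).
  move=> U V oU oV [u Uu] [v Vv].
  have [lU HU] := open_pair_cylinder oU Uu.
  have [lV HV] := open_pair_cylinder oV Vv.
  have [n interp] :=
    iter_wshift_interpolate phi_inj phi_aperiodic w_unit (lU ++ lV).
  have [x1 [ux1 vx1]] := interp u.1 v.1; have [x2 [ux2 vx2]] := interp u.2 v.2.
  exists n, (iter n (prod_map (wshift phi w)) (x1, x2)); split.
    by exists (x1, x2) => //; apply: HU;
      [exact: cylinder_catl ux1|exact: cylinder_catl ux2].
  by rewrite iter_prod_map; apply: HV;
    [exact: cylinder_catr vx1|exact: cylinder_catr vx2].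
split=> //; split=> // O [u Ou] oO.
have [l Hl] := open_pair_cylinder oO Ou.
have [n n_gt0 periodic] :=
  iter_wshift_periodic phi_inj phi_aperiodic w_unit l.
have [x1 [ux1 px1]] := periodic u.1; have [x2 [ux2 px2]] := periodic u.2.
exists (x1, x2); split; first exact: Hl.
by exists n; split; rewrite // iter_prod_map px1 px2.
Qed.
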